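(* Let $P\ge 2$. Let $\beta_1,\dots,\beta_{P-1}$ be real parameters varying in an open set, put $\beta_P:=1-\sum_{i=1}^{P-1}\beta_i$, and let $\omega_i=\omega_i(\beta_1,\dots,\beta_{P-1})$, $i=1,\dots,P$, be differentiable functions. Define $\Gamma(\kappa)=\prod_{i=1}^{P}|1-\omega_i\kappa|^{\beta_i}$. Let $\kappa_1,\dots,\kappa_{P-1}$ be differentiable functions of the $\beta$'s which are critical points of $\Gamma$, i.e. $\sum_{i=1}^P\frac{\beta_i\omega_i}{1-\kappa\,\omega_i}=0$ at $\kappa=\kappa_j$, and let $\kappa_P:=\kappa_M=2$ (a constant). Assume that $\frac{\partial}{\partial\beta_q}\Gamma(\kappa_i)=0$ for all $i=1,\dots,P$ and $q=1,\dots,P-1$ (total derivatives with respect to $\beta_q$). Assume moreover that $\omega_1,\dots,\omega_P$ are pairwise distinct and nonzero, $\beta_1,\dots,\beta_P$ are nonzero, $\kappa_1,\dots,\kappa_P$ are pairwise distinct and nonzero, and $1-\kappa_i\omega_j\neq 0$ for all $i,j$. Then for $i=1,\dots,P$ and $q=1,\dots,P-1$, $$\frac{\partial\omega_i}{\partial\beta_q}=\sum_{j=1}^{P}\frac{1-\kappa_j\omega_i}{\beta_i\kappa_j}\prod_{\substack{k=1\\k\neq j}}^{P}\frac{1-\kappa_k\omega_i}{\kappa_k-\kappa_j}\prod_{\substack{l=1\\l\neq i}}^{P}\frac{1-\kappa_j\omega_l}{\omega_l-\omega_i}\;\log\left|\frac{1-\kappa_j\omega_q}{1-\kappa_j\o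mega_P}\right|.$$
   Context: This arises in the optimization of a $P$-level Scheduled Relaxation Jacobi (SRJ) scheme: weights $\omega_i$ are applied with relative frequencies $\beta_i$, and $\Gamma(\kappa)$ is the per-iteration amplification factor, with $\kappa$ ranging over $[\kappa_m,\kappa_M]$, $\kappa_M=2$. *)

From HB Require Import structures.
From mathcomp Require Import all_boot all_order all_algebra.
From mathcomp Require Import all_classical all_reals all_analysis.
Set Implicit Arguments. Unset Strict Implicit. Unset Printing Implicit Defensive.
Import Order.TTheory GRing.Theory Num.Theory.
Import numFieldNormedType.Exports.
Local Open Scope ring_scope.

(* P = n.+2 levels; parameters beta_1..beta_{P-1} form a row vector of size n.+1.
   Indices 1..P are 'I_(n.+2) (0-based); index P is ord_max. *)

Definition extP {R : Type} (n : nat) (f : 'I_n.+1 -> R) (last : R) (i : 'I_n.+2) : R :=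
  match insub (val i) : option 'I_n.+1 with
  | Some j => f j
  | None => last
  end.

Definition betaP {R : realType} (n : nat) (b : 'rV[R]_n.+1) (i : 'I_n.+2) : R :=
  extP (fun j => b 0 j) (1 - \sum_(j < n.+1) b 0 j) i.

Definition kappaP {R : realType} (n : nat) (kap : 'I_n.+1 -> 'rV[R]_n.+1 -> R)
  (b : 'rV[R]_n.+1) (i : 'I_n.+2) : R :=
  extP (fun j => kap j b) 2 i.

Definition Gamma {R : realType} (n : nat) (om : 'I_n.+2 -> 'rV[R]_n.+1 -> R)
  (b : 'rV[R]_n.+1) (k : R) : R :=
  \prod_(i < n.+2) (`|1 - om i b * k| `^ betaP b i).

Definition e_dir {R : realType} (n : nat) (q : 'I_n.+1) : 'rV[R]_n.+1 :=
  delta_mx 0 q.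

From HB Require Import structures.
From mathcomp Require Import all_boot all_order all_algebra.
From mathcomp Require Import all_classical all_reals all_analysis.
From mathcomp Require Import ring zify.
Import Order.TTheory GRing.Theory Num.Theory.
Import numFieldNormedType.Exports.
Local Open Scope ring_scope.

Set Implicit Arguments.
Unset Strict Implicit.
Unset Printing Implicit Defensive.

(* Write [K_j] for kappa_j and [D_l] for the derivative of omega_l in the
   direction of beta_q.  Since log Gamma(k) = sum_l beta_l log |1 - omega_l k|
   and d beta_l / d beta_q is 1 for l = q, -1 for l = P and 0 otherwise,
   differentiating log Gamma(K_j) along beta_q, and using that this derivative
   vanishes while either Gamma'(K_j) = 0 (j < P) or K_P = 2 is constant, gives
     log |(1 - K_j omega_q) / (1 - K_j omega_P)|
       = K_j sum_l beta_l D_l / (1 - K_j omega_l)     for every j.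
   This is a linear system for the D_l with the Cauchy-like matrix
   [K_j / (1 - K_j omega_l)], which is inverted explicitly by Lagrange
   interpolation of z |-> prod_(m <> i) (omega_m - z) at the nodes 1 / K_j. *)

Section Interpolation.
Variable R : fieldType.

Lemma size_prod_leq2 (I : finType) (P : pred I) (F : I -> {poly R}) :
  (forall i, (size (F i) <= 2)%N) -> (size (\prod_(i | P i) F i)%R <= #|P|.+1)%N.
Proof.
move=> sF; rewrite -big_filter; have [s _ _ [_ <-]] := big_enumP.
elim: s => [|i s IHs]; first by rewrite big_nil size_poly1.
rewrite big_cons (leq_trans (size_polyMleq _ _)) //.
by move: (leq_add (sF i) IHs) => /=; lia.
Qed.

Lemma poly_eq_on_nodes N (x : 'I_N -> R) (p q : {poly R}) :
  injective x -> (size p <= N)%N -> (size q <= N)%N ->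
  (forall j, p.[x j] = q.[x j]) -> p = q.
Proof.
move=> x_inj sp sq epq; apply/eqP; rewrite -subr_eq0; apply/eqP.
apply: (@roots_geq_poly_eq0 _ _ [seq x j | j <- enum 'I_N]).
- by apply/allP => _ /mapP[j _ ->]; rewrite /root hornerD hornerN epq subrr.
- by rewrite map_inj_uniq ?enum_uniq.
- rewrite size_map size_enum_ord (leq_trans (size_polyD _ _)) //.
  by rewrite size_polyN geq_max sp sq.
Qed.

Lemma size_one_sub_scaleX (a : R) : (size (1 - a *: 'X : {poly R})%R <= 2)%N.
Proof.
rewrite (leq_trans (size_polyD _ _)) // size_polyN size_poly1 geq_max /=.
by rewrite (leq_trans (size_scale_leq _ _)) ?size_polyX.
Qed.

Lemma size_C_subX (a : R) : size (a%:P - 'X) = 2.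
Proof. by rewrite -opprB size_polyN size_XsubC. Qed.

(* Both sides are polynomials of degree < N in [z] that agree at the nodes
   [z = (K j)^-1]. *)
Lemma lagrange_prod_sub N (K w : 'I_N -> R) (i : 'I_N) (z : R) :
  (forall j k, j != k -> K j != K k) -> (forall j, K j != 0) ->
  \sum_j (\prod_(m | m != i) (1 - K j * w m)) *
      \prod_(k | k != j) ((1 - K k * z) / (K k - K j))
  = \prod_(m | m != i) (w m - z).
Proof.
case: N K w i => [|N] K w i K_inj K_neq0; first by case: i.
pose h j := \prod_(m | m != i) (1 - K j * w m).
pose D j := \prod_(k | k != j) (K k - K j).
have D_neq0 j : D j != 0.
  by apply/prodf_neq0 => k kj; rewrite subr_eq0 K_inj.
pose F := \sum_j (h j / D j) *: \prod_(k | k != j) (1 - K k *: 'X).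
pose G := \prod_(m | m != i) ((w m)%:P - 'X).
have hornerF t : F.[t] = \sum_j h j / D j * \prod_(k | k != j) (1 - K k * t).
  rewrite horner_sum; apply: eq_bigr => j _; rewrite hornerZ horner_prod.
  by congr (_ * _); apply: eq_bigr => k _; rewrite !hornerE.
have hornerG t : G.[t] = \prod_(m | m != i) (w m - t).
  by rewrite horner_prod; apply: eq_bigr => m _; rewrite !hornerE.
rewrite -hornerG; suff <- : F = G.
  rewrite hornerF; apply: eq_bigr => j _.
  by rewrite prodf_div mulrA mulrAC.
apply: (poly_eq_on_nodes (x := fun j => (K j)^-1)).
- by move=> j k /invr_inj; apply: contra_eq => /K_inj.
- rewrite (leq_trans (size_sum _ _ _)) //; apply/bigmax_leqP => j _.
  rewrite (leq_trans (size_scale_leq _ _)) //.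
  rewrite (leq_trans (size_prod_leq2 _ _)) ?cardC1 ?card_ord //.
  by move=> k; exact: size_one_sub_scaleX.
- rewrite (leq_trans (size_prod_leq2 _ _)) ?cardC1 ?card_ord // => m.
  by rewrite size_C_subX.
move=> j; rewrite hornerF hornerG (bigD1 j) //= [X in _ + X]big1 ?addr0; last first.
  move=> k kj; rewrite (bigD1 j) 1?eq_sym //= mulfV // subrr.
  by rewrite mul0r mulr0.
pose c := - (K j)^-1.
rewrite (eq_bigr (fun k => (K k - K j) * c)); last by move=> k _; rewrite /c; field.
rewrite [RHS](eq_bigr (fun m => (1 - K j * w m) * c)); last by move=> m _; rewrite /c; field.
by rewrite !prodrMr !cardC1 mulrA divfK.
Qed.

Definition cauchy_coef N (K w bt : 'I_N -> R) (i j : 'I_N) : R :=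
  (1 - K j * w i) / (bt i * K j)
  * (\prod_(k | k != j) ((1 - K k * w i) / (K k - K j)))
  * (\prod_(l | l != i) ((1 - K j * w l) / (w l - w i))).

Section CauchyInversion.
Variables (N : nat) (K w bt : 'I_N -> R).
Hypothesis K_inj : forall j k, j != k -> K j != K k.
Hypothesis K_neq0 : forall j, K j != 0.
Hypothesis w_inj : forall l m, l != m -> w l != w m.
Hypothesis one_subKw_neq0 : forall j l, 1 - K j * w l != 0.

Lemma cauchy_coef_dual (i l : 'I_N) : bt i != 0 ->
  \sum_j cauchy_coef K w bt i j * (K j / (1 - K j * w l)) = (l == i)%:R / bt i.
Proof.
move=> bt_neq0.
pose A m := \prod_k (1 - K k * w m).
pose Di := \prod_(m | m != i) (w m - w i).
have A_neq0 m : A m != 0 by apply/prodf_neq0 => k _.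
have Di_neq0 : Di != 0 by apply/prodf_neq0 => m mi; rewrite subr_eq0 w_inj.
have term j : cauchy_coef K w bt i j * (K j / (1 - K j * w l)) =
    A i / (bt i * Di * A l) * (\prod_(m | m != i) (1 - K j * w m)
      * \prod_(k | k != j) ((1 - K k * w l) / (K k - K j))).
  have splitA m : A m = (1 - K j * w m) * \prod_(k | k != j) (1 - K k * w m).
    by rewrite /A (bigD1 j).
  rewrite /cauchy_coef !prodf_div -/Di (splitA i) (splitA l).
  have Dj_neq0 : \prod_(k | k != j) (K k - K j) != 0.
    by apply/prodf_neq0 => k kj; rewrite subr_eq0 K_inj.
  have Al_neq0 : \prod_(k | k != j) (1 - K k * w l) != 0 by apply/prodf_neq0.
  by field; rewrite Dj_neq0 Al_neq0 one_subKw_neq0 K_neq0 Di_neq0 bt_neq0.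
rewrite (eq_bigr _ (fun j _ => term j)) -mulr_sumr lagrange_prod_sub //.
have [-> | li] := eqVneq l i; first by rewrite -/Di /=; field; rewrite A_neq0 Di_neq0 bt_neq0.
by rewrite (bigD1 l li) /= subrr mul0r !mulr0 mul0r.
Qed.

Lemma cauchy_inversion (x L : 'I_N -> R) (i : 'I_N) : bt i != 0 ->
  (forall j, L j = K j * \sum_l bt l * x l / (1 - K j * w l)) ->
  x i = \sum_j cauchy_coef K w bt i j * L j.
Proof.
move=> bt_neq0 eL.
transitivity (\sum_l bt l * x l *
    \sum_j cauchy_coef K w bt i j * (K j / (1 - K j * w l))).
  under eq_bigr => l _ do rewrite cauchy_coef_dual //.
  rewrite (bigD1 i) //= big1 ?addr0 => [|l /negbTE ->]; last by rewrite !mul0r mulr0.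
  by rewrite eqxx mul1r mulrC mulrA mulVf ?mul1r.
under eq_bigr => l _ do rewrite mulr_sumr.
rewrite exchange_big; apply: eq_bigr => j _ /=.
by rewrite eL !mulr_sumr; apply: eq_bigr => l _; ring.
Qed.

End CauchyInversion.

End Interpolation.

Section DirectionalDerivative.
Context {R : realType} {V : normedModType R}.

Lemma derive_along_line (W : normedModType R) (f : V -> W) x v :
  'D_v f x = 'D_1 (fun h : R => f (h *: v + x)) 0.
Proof.
rewrite /derive; apply: f_equal; apply: (f_equal (fun g => (g @ _)%classic)).
apply/funext => h /=.
by rewrite addr0 scale0r add0r [_%:A]mulr1.
Qed.

Lemma is_derive_along_line (W : normedModType R) (f : V -> W) x v df :
  is_derive x v f df <-> is_derive (0 : R) 1 (fun h : R => f (h *: v + x)) df.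
Proof.
split=> -[fxv <-]; apply: DeriveDef; rewrite ?derive_along_line //.
- exact: (derivable1P f x v).1.
- exact: (derivable1P f x v).2.
Qed.

Lemma is_derive_comp1 (f : V -> R) (g : R -> R) x v df dg :
  is_derive x v f df -> is_derive (f x) 1 g dg -> is_derive x v (g \o f) (dg * df).
Proof.
move=> /is_derive_along_line df_line dg_fx; apply/is_derive_along_line.
rewrite -[f x](_ : f (0 *: v + x) = f x) in dg_fx; last by rewrite scale0r add0r.
exact: is_derive1_comp.
Qed.

End DirectionalDerivative.

Lemma is_derive_ln_norm (R : realType) (y : R) :
  y != 0 -> is_derive y 1 (fun z => ln `|z|) y^-1.
Proof.
move=> y_neq0; have [y_lt0|y_gt0|] := ltgtP y 0; last by move/eqP: y_neq0.
- apply: (@near_eq_is_derive _ _ _ (@ln R \o -%R)).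
    by near=> z; rewrite /= ltr0_norm //; near: z; exact: lt_nbhsl.
  rewrite -[y^-1]opprK -invrN -mulrN1; apply: is_derive1_comp.
  by apply: is_derive1_ln; rewrite oppr_gt0.
- apply: (@near_eq_is_derive _ _ _ (@ln R)); last exact: is_derive1_ln.
  by near=> z; rewrite gtr0_norm //; near: z; exact: lt_nbhsr.
Unshelve. all: by end_near.
Qed.

Lemma is_derive_prod_norm_powR (R : realType) (V : normedModType R) (N : nat)
    (beta f : 'I_N -> V -> R) (dbeta df : 'I_N -> R) (x v : V) :
  (\forall c \near x, forall l, f l c != 0) ->
  (forall l, is_derive x v (beta l) (dbeta l)) ->
  (forall l, is_derive x v (f l) (df l)) ->
  is_derive x v (fun c => \prod_l `|f l c| `^ beta l c)
    ((\prod_l `|f l x| `^ beta l x) *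
       \sum_l (dbeta l * ln `|f l x| + beta l x * df l / f l x)).
Proof.
move=> f_neq0 dbeta_x df_x.
pose S c := \sum_l beta l c * ln `|f l c|.
have prodE c : (forall l, f l c != 0) ->
    \prod_l `|f l c| `^ beta l c = expR (S c).
  move=> fc_neq0; rewrite /S expR_sum; apply: eq_bigr => l _.
  by rewrite /powR normr_eq0 (negbTE (fc_neq0 l)).
have dS : is_derive x v S
    (\sum_l (dbeta l * ln `|f l x| + beta l x * df l / f l x)).
  have -> : S = \sum_l (fun c => beta l c * ln `|f l c|).
    by apply/funext => c; rewrite fct_sumE.
  apply: is_derive_sum => l.
  have dln := is_derive_comp1 (df_x l) (is_derive_ln_norm (nbhs_singleton f_neq0 l)).
  have -> : (fun c => beta l c * ln `|f l c|)
      = beta l * ((fun z => ln `|z|) \o f l) by [].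
  apply: is_derive_eq (is_deriveM (dbeta_x l) dln) _.
  by rewrite /comp -![_ *: _]/(_ * _); ring.
rewrite prodE; last exact: nbhs_singleton f_neq0.
apply: near_eq_is_derive (is_derive_comp1 dS (is_derive_expR _)).
by apply: filterS f_neq0 => c fc_neq0; rewrite /= prodE.
Qed.

Section LastIndex.
Variable n : nat.

Lemma ord_max_or_widen (j : 'I_n.+2) :
  j = ord_max \/ exists j' : 'I_n.+1, j = widen_ord (leqnSn n.+1) j'.
Proof.
have [->|j_neq] := eqVneq j ord_max; [by left | right].
have j_lt : (j < n.+1)%N.
  rewrite ltn_neqAle -ltnS ltn_ord andbT.
  by apply: contra j_neq => /eqP j_eq; apply/eqP/val_inj.
by exists (Ordinal j_lt); apply: val_inj.
Qed.

Lemma extP_widen (T : Type) (f : 'I_n.+1 -> T) t (j : 'I_n.+1) :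
  extP f t (widen_ord (leqnSn n.+1) j) = f j.
Proof. by rewrite /extP /= valK. Qed.

Lemma extP_max (T : Type) (f : 'I_n.+1 -> T) t : extP f t ord_max = t.
Proof. by rewrite /extP insubF //= ltnn. Qed.

End LastIndex.

Section ParameterDerivatives.
Variable R : realType.

Lemma is_derive_coord n (b v : 'rV[R]_n) (j : 'I_n) :
  is_derive b v (fun c : 'rV[R]_n => c 0 j) (v 0 j).
Proof.
have did := @derivable_id _ 'rV[R]_n b v.
apply: DeriveDef; first by move/derivable_mxP: did; apply.
have := derive_mx did; rewrite derive_id.
by move=> /(congr1 (fun M : 'rV[R]_n => M 0 j)); rewrite mxE.
Qed.

Lemma is_derive_betaP n (b v : 'rV[R]_n.+1) (l : 'I_n.+2) :
  is_derive b v (fun c => betaP c l) (extP (fun j => v 0 j) (- \sum_j v 0 j) l).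
Proof.
have [->|[j ->]] := ord_max_or_widen l; rewrite ?extP_widen ?extP_max.
  have -> : (fun c => betaP c ord_max)
      = cst 1 - \sum_j (fun c : 'rV[R]_n.+1 => c 0 j).
    by apply/funext => c; rewrite /betaP extP_max fct_sumE.
  have dsum := is_derive_sum (fun j => is_derive_coord b v j).
  by apply: is_derive_eq (is_deriveB (is_derive_cst (1 : R) b v) dsum) _; rewrite sub0r.
have -> : (fun c => betaP c (widen_ord (leqnSn n.+1) j))
    = (fun c : 'rV[R]_n.+1 => c 0 j).
  by apply/funext => c; rewrite /betaP extP_widen.
exact: is_derive_coord.
Qed.

Lemma sum_extP_mulr n (d : 'I_n.+1 -> R) (a : 'I_n.+2 -> R) :
  \sum_l extP d (- \sum_j d j) l * a l
  = \sum_j d j * (a (widen_ord (leqnSn n.+1) j) - a ord_max).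
Proof.
rewrite big_ord_recr /= extP_max mulNr mulr_suml -sumrB.
by apply: eq_bigr => j _; rewrite extP_widen mulrBr.
Qed.

Lemma sum_e_dir_mulr n (q : 'I_n.+1) (g : 'I_n.+1 -> R) :
  \sum_j (e_dir q : 'rV[R]_n.+1) 0 j * g j = g q.
Proof.
rewrite /e_dir (bigD1 q) //= big1 => [|j /negbTE jq]; last by rewrite mxE jq andbF mul0r.
by rewrite mxE !eqxx mul1r addr0.
Qed.

End ParameterDerivatives.

Section CriticalPoints.
Variables (R : realType) (n : nat) (U : set 'rV[R]_n.+1).
Variables (om : 'I_n.+2 -> 'rV[R]_n.+1 -> R) (kap : 'I_n.+1 -> 'rV[R]_n.+1 -> R).
Hypothesis U_open : open U.
Hypothesis om_diff : forall i b, U b -> differentiable (om i) b.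
Hypothesis kap_diff : forall j b, U b -> differentiable (kap j) b.
Hypothesis kap_crit : forall j b, U b ->
  \sum_(i < n.+2) betaP b i * om i b / (1 - kap j b * om i b) = 0.
Hypothesis Gamma_stationary : forall i q b, U b ->
  'D_(e_dir q) (fun c => Gamma om c (kappaP kap c i)) b = 0.
Hypothesis one_sub_neq0 : forall b, U b -> forall i j, 1 - kappaP kap b i * om j b != 0.

Lemma kappaP_max : (fun c => kappaP kap c ord_max) = cst 2.
Proof. by apply/funext => c; rewrite /kappaP extP_max. Qed.

Lemma kappaP_widen j : (fun c => kappaP kap c (widen_ord (leqnSn n.+1) j)) = kap j.
Proof. by apply/funext => c; rewrite /kappaP extP_widen. Qed.

Lemma derivable_kappaP b v j : U b -> derivable (fun c => kappaP kap c j) b v.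
Proof.
move=> Ub; have [->|[j' ->]] := ord_max_or_widen j.
  by rewrite kappaP_max; exact: derivable_cst.
by rewrite kappaP_widen; exact/diff_derivable/kap_diff.
Qed.

Lemma derive_kappaP_crit b v j : U b ->
  'D_v (fun c => kappaP kap c j) b *
    \sum_l betaP b l * om l b / (1 - kappaP kap b j * om l b) = 0.
Proof.
move=> Ub; have [->|[j' ->]] := ord_max_or_widen j.
  by rewrite kappaP_max derive_cst mul0r.
by rewrite {2}/kappaP extP_widen kap_crit // mulr0.
Qed.

Lemma is_derive_one_sub_om_kappaP b v l j : U b ->
  is_derive b v (fun c => 1 - om l c * kappaP kap c j)
    (- (om l b * 'D_v (fun c => kappaP kap c j) b + kappaP kap b j * 'D_v (om l) b)).
Proof.
move=> Ub; have dom := derivableP (diff_derivable (v := v) (om_diff l Ub)).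
have dkap := derivableP (derivable_kappaP (v := v) (j := j) Ub).
apply: is_derive_eq (is_deriveB (is_derive_cst (1 : R) b v) (is_deriveM dom dkap)) _.
by rewrite -![_ *: _]/(_ * _) sub0r.
Qed.

Lemma Gamma_neq0 b j : U b -> Gamma om b (kappaP kap b j) != 0.
Proof.
move=> Ub; apply/prodf_neq0 => l _; rewrite powR_eq0 normr_eq0 mulrC.
by rewrite (negbTE (one_sub_neq0 Ub j l)).
Qed.

Lemma ln_ratio_eq b q j : U b ->
  ln `| (1 - kappaP kap b j * om (widen_ord (leqnSn n.+1) q) b)
        / (1 - kappaP kap b j * om ord_max b) |
  = kappaP kap b j *
      \sum_l betaP b l * 'D_(e_dir q) (om l) b / (1 - kappaP kap b j * om l b).
Proof.
move=> Ub; set v : 'rV[R]_n.+1 := e_dir q; set K := kappaP kap b j.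
set dK := 'D_v (fun c => kappaP kap c j) b.
have near_neq0 : \forall c \near b, forall l, 1 - om l c * kappaP kap c j != 0.
  apply: filterS (open_nbhs_nbhs (conj U_open Ub)) => c Uc l.
  by rewrite mulrC one_sub_neq0.
have dGamma := is_derive_prod_norm_powR near_neq0 (fun l => is_derive_betaP b v l)
  (fun l => is_derive_one_sub_om_kappaP v l j Ub).
have := Gamma_stationary j q Ub; rewrite derive_val -/v -/K -/dK => /eqP.
rewrite mulf_eq0 (negbTE (Gamma_neq0 j Ub)) /= => /eqP.
rewrite big_split /= sum_extP_mulr sum_e_dir_mulr.
have -> : \sum_l betaP b l * - (om l b * dK + K * 'D_v (om l) b) / (1 - om l b * K)
    = - (dK * \sum_l betaP b l * om l b / (1 - K * om l b))
      - K * \sum_l betaP b l * 'D_v (om l) b / (1 - K * om l b).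
  rewrite !mulr_sumr -sumrN -sumrB; apply: eq_bigr => l _.
  by rewrite [om l b * K]mulrC; ring.
rewrite derive_kappaP_crit // oppr0 sub0r => /eqP; rewrite subr_eq0 => /eqP <-.
have := one_sub_neq0 Ub j (widen_ord (leqnSn n.+1) q).
have := one_sub_neq0 Ub j ord_max; rewrite -/K => Kw_neq0 Kq_neq0.
by rewrite normrM normfV ln_div ?posrE ?normr_gt0 ?invr_gt0 ?normr_gt0 // !(mulrC K).
Qed.

End CriticalPoints.

Theorem theorem1 (R : realType) (n : nat) (U : set 'rV[R]_n.+1)
  (om : 'I_n.+2 -> 'rV[R]_n.+1 -> R) (kap : 'I_n.+1 -> 'rV[R]_n.+1 -> R) :
  open U ->
  (forall i b, U b -> differentiable (om i) b) ->
  (forall j b, U b -> differentiable (kap j) b) ->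
  (* kappa_1..kappa_{P-1} are critical points of Gamma *)
  (forall j b, U b ->
     \sum_(i < n.+2) betaP b i * om i b / (1 - kap j b * om i b) = 0) ->
  (* total derivatives of Gamma(kappa_i) w.r.t. beta_q vanish, i = 1..P *)
  (forall i q b, U b ->
     'D_(e_dir q) (fun c => Gamma om c (kappaP kap c i)) b = 0) ->
  (* non-degeneracy *)
  (forall b, U b -> forall i j, i != j -> om i b != om j b) ->
  (forall b, U b -> forall i, om i b != 0) ->
  (forall b, U b -> forall i, betaP b i != 0) ->
  (forall b, U b -> forall i j, i != j -> kappaP kap b i != kappaP kap b j) ->
  (forall b, U b -> forall i, kappaP kap b i != 0) ->
  (forall b, U b -> forall i j, 1 - kappaP kap b i * om j b != 0) ->
  forall b, U b -> forall (i : 'I_n.+2) (q : 'I_n.+1),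
    'D_(e_dir q) (om i) b =
    \sum_(j < n.+2)
      ((1 - kappaP kap b j * om i b) / (betaP b i * kappaP kap b j)
       * (\prod_(k < n.+2 | k != j)
            ((1 - kappaP kap b k * om i b) / (kappaP kap b k - kappaP kap b j)))
       * (\prod_(l < n.+2 | l != i)
            ((1 - kappaP kap b j * om l b) / (om l b - om i b)))
       * ln `| (1 - kappaP kap b j * om (widen_ord (leqnSn n.+1) q) b)
               / (1 - kappaP kap b j * om ord_max b) |).
Proof.
move=> U_open om_diff kap_diff kap_crit Gamma_stationary om_inj _ beta_neq0
  kappa_inj kappa_neq0 one_sub_neq0 b Ub i q.
apply: (@cauchy_inversion _ _ (kappaP kap b) (om^~ b) (betaP b) _ _ _ _
  (fun l => 'D_(e_dir q) (om l) b)).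
- exact: kappa_inj _ Ub.
- exact: kappa_neq0 _ Ub.
- exact: om_inj _ Ub.
- exact: one_sub_neq0 _ Ub.
- by have := beta_neq0 _ Ub i.
- move=> j; exact: (ln_ratio_eq U_open om_diff kap_diff kap_crit Gamma_stationary
    one_sub_neq0 q j Ub).
Qed.
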